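(* Let $\mathcal{V}$ be a variety of $\Omega$-algebras and let $\sigma$ be an identity holding in $\mathcal{V}$. Then every algebra in the Mal'tsev product $\mathcal{V}\circ\mathcal{S}$ satisfies every identity in $\sigma^p$.
   Context: Standing conventions: $\Omega$-algebras are of a plural similarity type (no nullary operation symbols, at least one operation symbol of arity $\ge2$). $T_n$ is the set of $\Omega$-terms in $x_1,\dots,x_n$ in which all $n$ variables occur. An identity is regular if the same variables occur on both sides. $\mathcal{S}$ is the variety of $\Omega$-algebras satisfying all regular identities. $\mathcal{V}\circ\mathcal{S}$ is the class of $\Omega$-algebras $A$ having a congruence $\theta$ with $A/\theta\in\mathcal{S}$ and every $\theta$-class (a subalgebra) in $\mathcal{V}$. For an identity $\sigma$ of the form $u(y_1,\dots,y_n)=v(y_1,\dots,y_n)$ (variables of $u,v$ among $y_1,\dots,y_n$) and $m\ge1$, $\sigma^p_m$ is the set of all identities $u(r_1,\dots,r_n)=v(r_1,\dots,r_n)$ obtained by substituting $r_i(x_1,\dots,x_m)$ for $y_i$, where $r_1,\dots,r_n$ range over $T_m$; $\sigma^p=\bigcup_{m>0}\sigma^p_m$. *)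

From mathcomp Require Import all_boot.
From Stdlib Require Import ClassicalEpsilon.
Set Implicit Arguments. Unset Strict Implicit. Unset Printing Implicit Defensive.

Record signature := Signature { osym : Type; arity : osym -> nat }.

Definition plural (Sg : signature) : Prop :=
  (forall o : osym Sg, arity o <> 0) /\ (exists o : osym Sg, 2 <= arity o).

(* Omega-terms over variables indexed by nat (x_1, x_2, ... are Var 0, Var 1, ...). *)
Inductive term (Sg : signature) : Type :=
| Var : nat -> term Sg
| App : forall o : osym Sg, ('I_(arity o) -> term Sg) -> term Sg.
Arguments Var {Sg} _.
Arguments App {Sg} o _.

Fixpoint occurs {Sg} (j : nat) (t : term Sg) : Prop :=
  match t with
  | Var k => k = j
  | App o f => exists i, occurs j (f i)
  end.

Fixpoint tsubst {Sg} (s : nat -> term Sg) (t : term Sg) : term Sg :=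
  match t with
  | Var k => s k
  | App o f => App o (fun i => tsubst s (f i))
  end.

(* T_m: terms in x_1..x_m (Var 0 .. Var (m-1)) in which all m variables occur. *)
Definition in_T {Sg} (m : nat) (t : term Sg) : Prop :=
  forall j, occurs j t <-> j < m.

Record algebra (Sg : signature) := Algebra {
  car :> Type;
  op : forall o : osym Sg, ('I_(arity o) -> car) -> car }.

Arguments op {Sg} {a} o _.
Fixpoint eval {Sg} {A : algebra Sg} (e : nat -> A) (t : term Sg) : A :=
  match t with
  | Var k => e k
  | App o f => op o (fun i => eval e (f i))
  end.

Definition identity (Sg : signature) := (term Sg * term Sg)%type.

Definition satisfies {Sg} (A : algebra Sg) (id : identity Sg) : Prop :=
  forall e : nat -> A, eval e id.1 = eval e id.2.

Definition regular {Sg} (id : identity Sg) : Prop :=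
  forall j, occurs j id.1 <-> occurs j id.2.

Definition is_variety {Sg} (V : algebra Sg -> Prop) : Prop :=
  exists Sigma : identity Sg -> Prop,
    forall A, V A <-> (forall id, Sigma id -> satisfies A id).

Definition inS {Sg} (A : algebra Sg) : Prop :=
  forall id : identity Sg, regular id -> satisfies A id.

Definition congruence {Sg} (A : algebra Sg) (th : A -> A -> Prop) : Prop :=
  (forall a, th a a) /\ (forall a b, th a b -> th b a) /\
  (forall a b c, th a b -> th b c -> th a c) /\
  (forall o (f g : 'I_(arity o) -> A), (forall i, th (f i) (g i)) ->
      th (op o f) (op o g)).

Definition qcar {Sg} (A : algebra Sg) (th : A -> A -> Prop) : Type :=
  {P : A -> Prop | exists a, P = th a}.

Definition qclass {Sg} (A : algebra Sg) (th : A -> A -> Prop) (a : A)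
  : qcar th := exist _ (th a) (ex_intro _ a erefl).

Definition qrep {Sg} (A : algebra Sg) (th : A -> A -> Prop) (c : qcar th) : A :=
  proj1_sig (constructive_indefinite_description _ (proj2_sig c)).

Definition quotient {Sg} (A : algebra Sg) (th : A -> A -> Prop) : algebra Sg :=
  @Algebra Sg (qcar th)
    (fun o F => qclass th (op o (fun i => qrep (F i)))).

Definition closed {Sg} (A : algebra Sg) (P : A -> Prop) : Prop :=
  forall o (f : 'I_(arity o) -> A), (forall i, P (f i)) -> P (op o f).

Definition subalg {Sg} (A : algebra Sg) (P : A -> Prop) (H : closed P)
  : algebra Sg :=
  @Algebra Sg {a : A | P a}
    (fun o F => exist _ (op o (fun i => proj1_sig (F i)))
                        (H o _ (fun i => proj2_sig (F i)))).

Definition maltsev_S {Sg} (V : algebra Sg -> Prop) (A : algebra Sg) : Prop :=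
  exists th : A -> A -> Prop,
    congruence th /\ inS (quotient th) /\
    (forall a : A, exists H : closed (th a), V (subalg H)).

(* Modulo the congruence θ, any two terms of T_m take the same value under every
   assignment, because A/θ satisfies the regular identity between them. So the
   values of r_1, ..., r_n all lie in a single θ-class; that class is a
   subalgebra in V, where σ holds, and evaluating σ inside it at those values
   yields the substituted identity in A. *)

From Pilot Require Import Defs.
From mathcomp Require Import all_boot.
From Stdlib Require Import FunctionalExtensionality PropExtensionality ProofIrrelevance ClassicalEpsilon.

Set Implicit Arguments. Unset Strict Implicit. Unset Printing Implicit Defensive.

Lemma eval_eq_occurs {Sg} (A : algebra Sg) (e1 e2 : nat -> A) (t : term Sg) :
  (forall j, occurs j t -> e1 j = e2 j) -> eval e1 t = eval e2 t.
Proof.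
elim: t => [k|o f IH] He /=; first exact: He.
congr (op o _); apply: functional_extensionality => i; apply: IH => j Hj.
by apply: He; exists i.
Qed.

Lemma eval_tsubst {Sg} (A : algebra Sg) (e : nat -> A) s (t : term Sg) :
  eval e (tsubst s t) = eval (fun k => eval e (s k)) t.
Proof.
elim: t => [k|o f IH] //=.
by congr (op o _); apply: functional_extensionality => i; apply: IH.
Qed.

Lemma val_eval_subalg {Sg} (A : algebra Sg) (P : A -> Prop) (H : Defs.closed P)
    (g : nat -> subalg H) (t : term Sg) :
  proj1_sig (eval g t) = eval (fun k => proj1_sig (g k)) t.
Proof.
elim: t => [k|o f IH] //=.
by congr (op o _); apply: functional_extensionality => i; apply: IH.
Qed.

Lemma in_T_regular {Sg} m (t1 t2 : term Sg) :
  in_T m t1 -> in_T m t2 -> regular (t1, t2).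
Proof. by move=> H1 H2 j /=; rewrite H1 H2. Qed.

Section Quotient.
Variables (Sg : signature) (A : algebra Sg) (th : A -> A -> Prop).
Hypothesis th_congr : congruence th.

Lemma qclass_eq x y : th x y -> qclass th x = qclass th y.
Proof.
case: th_congr => _ [th_sym [th_trans _]] Hxy.
have Exy : th x = th y.
  apply: functional_extensionality => z; apply: propositional_extensionality.
  by split; [apply: th_trans (th_sym _ _ Hxy) | apply: th_trans Hxy].
rewrite /qclass; move: (ex_intro _ x _) (ex_intro _ y _); rewrite Exy => p q.
by rewrite (proof_irrelevance _ p q).
Qed.

Lemma qclass_inj_rel x y : qclass th x = qclass th y -> th x y.
Proof.
move=> /(f_equal (@proj1_sig _ _)) /= ->.
by case: th_congr.
Qed.

Lemma qrep_rel a : th a (qrep (qclass th a)).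
Proof.
rewrite /qrep; case: (constructive_indefinite_description _ _) => b /= ->.
by case: th_congr.
Qed.

Lemma eval_quotient (e : nat -> A) (t : term Sg) :
  @eval _ (quotient th) (fun k => qclass th (e k)) t = qclass th (eval e t).
Proof.
elim: t => [k|o f IH] //=.
apply: qclass_eq; case: th_congr => _ [th_sym [_ th_op]]; apply: th_op => i.
by rewrite IH; apply: th_sym; apply: qrep_rel.
Qed.

Lemma regular_eval_rel (e : nat -> A) (t1 t2 : term Sg) :
  inS (quotient th) -> regular (t1, t2) -> th (eval e t1) (eval e t2).
Proof.
move=> HS Hreg; apply: qclass_inj_rel.
by rewrite -!eval_quotient; apply: (HS (t1, t2)).
Qed.

Lemma class_satisfies_eval a (Ha : Defs.closed (th a)) (g : nat -> A)
    (u v : term Sg) :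
  satisfies (subalg Ha) (u, v) -> (forall j, th a (g j)) -> eval g u = eval g v.
Proof.
move=> Huv Hg; pose g' j := exist (th a) (g j) (Hg j) : subalg Ha.
by have := f_equal (@proj1_sig _ _) (Huv g'); rewrite !val_eval_subalg.
Qed.

End Quotient.

Theorem lemma2p6 (Sg : signature) (Hpl : plural Sg)
  (V : algebra Sg -> Prop) (HV : is_variety V)
  (n : nat) (u v : term Sg)
  (Hu : forall j, occurs j u -> j < n) (Hv : forall j, occurs j v -> j < n)
  (Hsig : forall B, V B -> satisfies B (u, v))
  (m : nat) (Hm : 1 <= m) (r : nat -> term Sg)
  (Hr : forall i, i < n -> in_T m (r i))
  (A : algebra Sg) (HA : maltsev_S V A) :
  satisfies A (tsubst r u, tsubst r v).
Proof.
case: HA => th [th_congr [HS Hclass]] e /=.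
set a := eval e (r 0).
pose g i := if i < n then eval e (r i) else a.
have Hg j : th a (g j).
  rewrite /g; case: ifP => [Hj|_]; last by case: th_congr.
  have Hn : 0 < n by exact: leq_ltn_trans Hj.
  have Hreg := in_T_regular (Hr 0 Hn) (Hr j Hj).
  exact (regular_eval_rel th_congr e HS Hreg).
have [Ha HVa] := Hclass a.
have Eu : eval (fun k => eval e (r k)) u = eval g u.
  by apply: eval_eq_occurs => j /Hu Hj; rewrite /g Hj.
have Ev : eval (fun k => eval e (r k)) v = eval g v.
  by apply: eval_eq_occurs => j /Hv Hj; rewrite /g Hj.
rewrite !eval_tsubst Eu Ev.
exact: class_satisfies_eval (Hsig _ HVa) Hg.
Qed.
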